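(* Let $\mathcal{I}$ be an ideal on $\omega$ such that $\mathrm{fin}\subseteq\mathcal{I}$. Then there exist $A, C \in [\omega]^\omega$ such that $A = \omega\setminus C$ and $\mathcal{I}|A$ is isomorphic to $\mathcal{I}$.
   Context: $\mathrm{fin}$ is the ideal of finite subsets of $\omega$. For $A\subseteq\omega$, $\mathcal{I}|A = \{I \subseteq A : I\in\mathcal{I}\}$, an ideal on $A$. Ideals $\mathcal{I}$ on $\Omega$ and $\mathcal{J}$ on $\Omega'$ are isomorphic if there is a bijection $f:\Omega\to\Omega'$ such that for every $B\subseteq\Omega'$, $B\in\mathcal{J}$ iff $f^{-1}(B)\in\mathcal{I}$. *)

From Stdlib Require Import Arith.

Definition pset (T : Type) := T -> Prop.

Definition is_ideal {T : Type} (I : pset (pset T)) : Prop :=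
  I (fun _ => False) /\
  (forall A B : pset T, I B -> (forall x, A x -> B x) -> I A) /\
  (forall A B : pset T, I A -> I B -> I (fun x => A x \/ B x)) /\
  ~ I (fun _ => True).

Definition finite_nat (A : pset nat) : Prop := exists m, forall n, A n -> n < m.

Definition infinite_nat (A : pset nat) : Prop := ~ finite_nat A.

Definition contains_fin (I : pset (pset nat)) : Prop :=
  forall A, finite_nat A -> I A.

(* I|A = { X ⊆ A : X ∈ I }, an ideal on (the subtype) A *)
Definition restrict {T : Type} (I : pset (pset T)) (A : pset T)
  : pset (pset {x : T | A x}) :=
  fun S => I (fun x => exists h : A x, S (exist _ x h)).

Definition bijective_fun {X Y : Type} (f : X -> Y) : Prop :=
  (forall x y, f x = f y -> x = y) /\ (forall y, exists x, f x = y).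

Definition ideal_iso {X Y : Type} (I : pset (pset X)) (J : pset (pset Y)) : Prop :=
  exists f : X -> Y, bijective_fun f /\
    forall B : pset Y, J B <-> I (fun x => B (f x)).

(* If [I] contains an infinite set, enumerate an infinite [D ∈ I] as
   [h 0 < h 1 < ...] and move [h k] to [h (2k+1)], fixing every point off [D]
   (Hilbert's hotel).  The resulting injection [g] has range [ω \ {h (2k)}],
   and [B] and [g[B]] differ only inside [D], so [B ∈ I <-> g[B] ∈ I]; hence
   [g] is an isomorphism from [I] onto [I|range g].  Otherwise [I = fin], and
   the same construction with [h = id], namely [k ↦ 2k+1], is strictly
   increasing and therefore preserves finiteness in both directions. *)
From Stdlib Require Import Arith Lia Classical ClassicalEpsilon ProofIrrelevance.

Definition range {X Y : Type} (f : X -> Y) : pset Y := fun y => exists x, f x = y.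

Definition image {X Y : Type} (f : X -> Y) (B : pset X) : pset Y :=
  fun y => exists x, B x /\ f x = y.

Definition strictly_increasing (h : nat -> nat) : Prop :=
  forall k l, k < l -> h k < h l.

Lemma ideal_ext {T : Type} (I : pset (pset T)) (X Y : pset T) :
  is_ideal I -> (forall x, X x <-> Y x) -> I X -> I Y.
Proof. intros [_ [Hsub _]] HXY HX. apply (Hsub Y X HX). intro x; apply HXY. Qed.

Lemma ideal_iso_of_injection {T : Type} (I : pset (pset T)) (g : T -> T) :
  is_ideal I -> (forall x y, g x = g y -> x = y) ->
  (forall B, I B <-> I (image g B)) ->
  ideal_iso (restrict I (range g)) I.
Proof.
  intros HI Hinj HB.
  pose (f := fun a : {x : T | range g x} =>
    proj1_sig (constructive_indefinite_description _ (proj2_sig a))).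
  assert (Hgf : forall a, g (f a) = proj1_sig a).
  { intro a. unfold f. destruct (constructive_indefinite_description _ _). exact e. }
  assert (Hfg : forall y (hy : range g (g y)), f (exist _ (g y) hy) = y).
  { intros y hy. apply Hinj. rewrite Hgf. reflexivity. }
  exists f. split; [split|].
  - intros [x hx] [y hy] Hxy.
    apply (f_equal g) in Hxy. rewrite !Hgf in Hxy. cbn in Hxy. subst y. f_equal. apply proof_irrelevance.
  - intro y. exists (exist _ (g y) (ex_intro (fun z => g z = g y) y eq_refl)). apply Hfg.
  - intro B. unfold restrict. rewrite HB.
    assert (Hpre : forall x, image g B x <-> exists hx : range g x, B (f (exist _ x hx))).
    { intro x. split.
      - intros [y [By <-]]. exists (ex_intro (fun z => g z = g y) y eq_refl).
        rewrite Hfg. exact By.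
      - intros [hx Bx]. exists (f (exist _ x hx)). split; [exact Bx | apply Hgf]. }
    split; apply ideal_ext; auto; intro x; specialize (Hpre x); tauto.
Qed.

Lemma ideal_image_of_identity_off {T : Type} (I : pset (pset T)) (g : T -> T) (D : pset T) :
  is_ideal I -> I D ->
  (forall y, ~ D y -> g y = y) -> (forall y, D y -> D (g y)) ->
  forall B, I B <-> I (image g B).
Proof.
  intros HI ID Hfix Hstab B.
  destruct HI as [_ [Hsub [Hunion _]]].
  split; intro IB.
  - apply (Hsub _ (fun x => B x \/ D x)); [apply Hunion; assumption|].
    intros x [y [By <-]].
    destruct (classic (D y)) as [Dy | nDy]; [right; auto | left; rewrite Hfix; auto].
  - apply (Hsub _ (fun x => image g B x \/ D x)); [apply Hunion; assumption|].
    intros x Bx.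
    destruct (classic (D x)) as [Dx | nDx]; [right; auto | left].
    exists x. split; auto.
Qed.

Lemma strictly_increasing_of_succ (h : nat -> nat) :
  (forall k, h k < h (S k)) -> strictly_increasing h.
Proof.
  intros Hsucc k l Hkl. induction Hkl; [apply Hsucc|].
  specialize (Hsucc m). lia.
Qed.

Lemma strictly_increasing_ge (h : nat -> nat) :
  strictly_increasing h -> forall k, k <= h k.
Proof. intros Hh k. induction k; [lia|]. specialize (Hh k (S k)). lia. Qed.

Lemma strictly_increasing_injective (h : nat -> nat) :
  strictly_increasing h -> forall k l, h k = h l -> k = l.
Proof.
  intros Hh k l Hkl.
  destruct (lt_eq_lt_dec k l) as [[Hlt | Heq] | Hgt]; auto;
    [specialize (Hh _ _ Hlt) | specialize (Hh _ _ Hgt)]; lia.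
Qed.

Lemma finite_image_strictly_increasing (g : nat -> nat) :
  strictly_increasing g -> forall B, finite_nat B <-> finite_nat (image g B).
Proof.
  intros Hg B. split.
  - intros [m Hm]. exists (g m). intros x [y [By <-]]. apply Hg, Hm, By.
  - intros [m Hm]. exists m. intros y By.
    pose proof (strictly_increasing_ge g Hg y).
    specialize (Hm (g y) (ex_intro _ y (conj By eq_refl))). lia.
Qed.

Lemma infinite_nat_unbounded (A : pset nat) :
  infinite_nat A -> forall m, exists n, m <= n /\ A n.
Proof.
  intros HA m. apply NNPP. intro Hnone. apply HA. exists m. intros n An.
  destruct (le_lt_dec m n); [exfalso; eauto | assumption].
Qed.

Lemma infinite_nat_of_dominating_seq (A : pset nat) (s : nat -> nat) :
  (forall m, m <= s m) -> (forall m, A (s m)) -> infinite_nat A.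
Proof. intros Hs HA [m Hm]. specialize (Hm _ (HA m)). specialize (Hs m). lia. Qed.

Lemma increasing_enumeration (C : pset nat) :
  infinite_nat C -> exists h, strictly_increasing h /\ forall k, C (h k).
Proof.
  intro HC.
  pose (next := fun m => proj1_sig
    (constructive_indefinite_description _ (infinite_nat_unbounded C HC m))).
  assert (Hnext : forall m, m <= next m /\ C (next m)).
  { intro m. unfold next. destruct (constructive_indefinite_description _ _). exact a. }
  exists (fun k => Nat.iter k (fun x => next (S x)) (next 0)). split.
  - apply strictly_increasing_of_succ. intro k. rewrite Nat.iter_succ.
    destruct (Hnext (S (Nat.iter k (fun x => next (S x)) (next 0)))). lia.
  - intros [|k]; apply Hnext.
Qed.

Section Hotel.

Context {T : Type} (h : nat -> T).
Hypothesis h_inj : forall k l, h k = h l -> k = l.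

Definition hotel (y : T) : T :=
  match excluded_middle_informative (range h y) with
  | left e => h (2 * proj1_sig (constructive_indefinite_description _ e) + 1)
  | right _ => y
  end.

Lemma hotel_on_range k : hotel (h k) = h (2 * k + 1).
Proof.
  unfold hotel. destruct (excluded_middle_informative _) as [e | ne].
  - destruct (constructive_indefinite_description _ e) as [k' Hk']. cbn.
    apply h_inj in Hk'. subst k'. reflexivity.
  - exfalso. apply ne. exists k. reflexivity.
Qed.

Lemma hotel_off_range y : ~ range h y -> hotel y = y.
Proof. intro ny. unfold hotel. destruct (excluded_middle_informative _); tauto. Qed.

Lemma hotel_injective x y : hotel x = hotel y -> x = y.
Proof.
  destruct (classic (range h x)) as [[k <-] | nx];
    destruct (classic (range h y)) as [[l <-] | ny];
    rewrite ?hotel_on_range, ?hotel_off_range by assumption; intro Hxy.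
  - apply h_inj in Hxy. f_equal. lia.
  - exfalso. apply ny. rewrite <- Hxy. eexists; reflexivity.
  - exfalso. apply nx. rewrite Hxy. eexists; reflexivity.
  - exact Hxy.
Qed.

Lemma range_hotel x : range hotel x <-> ~ (exists k, h (2 * k) = x).
Proof.
  split.
  - intros [y <-] [k Hk]. destruct (classic (range h y)) as [[l <-] | ny].
    + rewrite hotel_on_range in Hk. apply h_inj in Hk. lia.
    + rewrite hotel_off_range in Hk by assumption. apply ny. eexists; eauto.
  - intro nEven. destruct (classic (range h x)) as [[m <-] | nx].
    + destruct (Nat.Even_or_Odd m) as [[k ->] | [k ->]].
      * exfalso. apply nEven. eexists; reflexivity.
      * exists (h k). apply hotel_on_range.
    + exists x. apply hotel_off_range, nx.
Qed.

End Hotel.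

Lemma hotel_invariant_of_infinite_member (I : pset (pset nat)) (C : pset nat) :
  is_ideal I -> I C -> infinite_nat C ->
  exists h, strictly_increasing h /\ forall B, I B <-> I (image (hotel h) B).
Proof.
  intros HI IC HC.
  destruct (increasing_enumeration C HC) as [h [Hh HhC]].
  pose proof (strictly_increasing_injective h Hh) as h_inj.
  exists h. split; [exact Hh|].
  apply ideal_image_of_identity_off with (D := range h); auto.
  - destruct HI as [_ [Hsub _]]. apply (Hsub _ C IC). intros x [k <-]. apply HhC.
  - apply hotel_off_range.
  - intros y [k <-]. rewrite hotel_on_range by assumption. eexists; reflexivity.
Qed.

Lemma hotel_invariant_of_fin (I : pset (pset nat)) :
  (forall X, I X <-> finite_nat X) ->
  exists h, strictly_increasing h /\ forall B, I B <-> I (image (hotel h) B).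
Proof.
  intro HIfin.
  assert (Hodd : forall k, hotel (fun n => n) k = 2 * k + 1)
    by (intro k; apply (hotel_on_range (fun n => n)); auto).
  exists (fun n => n). split; [intros k l; auto|].
  intro B. rewrite !HIfin. apply finite_image_strictly_increasing.
  intros k l Hkl. rewrite !Hodd. lia.
Qed.

Theorem lemma6p1 (I : pset (pset nat)) :
  is_ideal I -> contains_fin I ->
  exists A C : pset nat,
    infinite_nat A /\ infinite_nat C /\
    (forall n, A n <-> ~ C n) /\
    ideal_iso (restrict I A) I.
Proof.
  intros HI Hfin.
  assert (Hhotel : exists h, strictly_increasing h /\
                     forall B, I B <-> I (image (hotel h) B)).
  { destruct (classic (exists C, I C /\ infinite_nat C)) as [[C [IC HC]] | Hnone].
    - exact (hotel_invariant_of_infinite_member I C HI IC HC).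
    - apply hotel_invariant_of_fin. intro X. split; [|apply Hfin].
      intro IX. apply NNPP. intro HX. apply Hnone. eauto. }
  destruct Hhotel as [h [Hh HB]].
  pose proof (strictly_increasing_injective h Hh) as h_inj.
  pose proof (strictly_increasing_ge h Hh) as h_ge.
  exists (range (hotel h)), (fun x => exists k, h (2 * k) = x).
  split; [|split; [|split]].
  - apply infinite_nat_of_dominating_seq with (fun k => h (2 * k + 1)).
    + intro k. specialize (h_ge (2 * k + 1)). lia.
    + intro k. exists (h k). apply hotel_on_range, h_inj.
  - apply infinite_nat_of_dominating_seq with (fun k => h (2 * k)).
    + intro k. specialize (h_ge (2 * k)). lia.
    + intro k. exists k. reflexivity.
  - apply range_hotel, h_inj.
  - apply ideal_iso_of_injection; auto. apply hotel_injective, h_inj.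
Qed.
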